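(* Let $(X,\mathrm{dist})$ be a metric space, $P\subset X$ finite, $\varepsilon\ge0$, and suppose $G$ is a bipartite Steiner $(1+\varepsilon)$-spanner for $P$ with $|E|$ edges. Then there is a $(2+2\varepsilon)$-spanner for $P$ (a geometric graph with vertex set exactly $P$) with at most $|E|$ edges.
   Context: A geometric graph on a finite subset $V$ of $X$ has each edge $uv$ weighted by $\mathrm{dist}(u,v)$; $\mathrm{dist}_G$ denotes shortest-path length. A Steiner $t$-spanner for $P$ is a geometric graph $G$ on $P\cup S$ for a finite $S\subset X\setminus P$ with $\mathrm{dist}_G(u,v)\le t\,\mathrm{dist}(u,v)$ for all $u,v\in P$; it is bipartite if every edge joins a point of $P$ to a point of $S$. A $t$-spanner is a Steiner $t$-spanner with $S=\emptyset$. *)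

From HB Require Import structures.
From mathcomp Require Import all_boot all_order all_algebra.
From mathcomp Require Import finmap.
From mathcomp Require Import reals.
Set Implicit Arguments. Unset Strict Implicit. Unset Printing Implicit Defensive.
Import Order.TTheory GRing.Theory Num.Theory.
Local Open Scope ring_scope.

Definition is_metric (R : realType) (X : Type) (d : X -> X -> R) : Prop :=
  (forall x y, 0 <= d x y) /\
  (forall x y, d x y = 0 <-> x = y) /\
  (forall x y, d x y = d y x) /\
  (forall x y z, d x z <= d x y + d y z).

Local Open Scope fset_scope.
Local Open Scope ring_scope.

(* A geometric graph with vertex set V and edge set E: every edge is a
   2-element subset of V (undirected, no loops); the weight of the edge
   {u,v} is d u v. *)
Definition geometric_graph (X : choiceType) (V : {fset X}) (E : {fset {fset X}}) : Prop :=
  forall e, e \in E -> #|` e| = 2%N /\ e `<=` V.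

Definition adj (X : choiceType) (E : {fset {fset X}}) : rel X :=
  fun a b => [fset a; b] \in E.

Definition walk_len (R : realType) (X : choiceType) (d : X -> X -> R) (u : X) (s : seq X) : R :=
  \sum_(p <- zip (u :: s) s) d p.1 p.2.

(* dist_G(u,v) <= b : some walk from u to v in G has length <= b
   (dist_G is the minimum over the finitely many simple paths). *)
Definition distG_le (R : realType) (X : choiceType) (d : X -> X -> R)
    (E : {fset {fset X}}) (u v : X) (b : R) : Prop :=
  exists s : seq X, path (adj E) u s /\ last u s = v /\ walk_len d u s <= b.

Definition steiner_spanner (R : realType) (X : choiceType) (d : X -> X -> R)
    (P S : {fset X}) (E : {fset {fset X}}) (t : R) : Prop :=
  [disjoint P & S] /\ geometric_graph (P `|` S) E /\
  (forall u v, u \in P -> v \in P -> distG_le d E u v (t * d u v)).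

Definition bipartite_PS (X : choiceType) (P S : {fset X}) (E : {fset {fset X}}) : Prop :=
  forall e, e \in E -> exists p s, p \in P /\ s \in S /\ e = [fset p; s].

Definition spanner (R : realType) (X : choiceType) (d : X -> X -> R)
    (P : {fset X}) (E : {fset {fset X}}) (t : R) : Prop :=
  steiner_spanner d P fset0 E t.

From HB Require Import structures.
From mathcomp Require Import all_boot all_order all_algebra.
From mathcomp Require Import finmap.
From mathcomp Require Import reals.
Import Order.TTheory GRing.Theory Num.Theory.
Set Implicit Arguments. Unset Strict Implicit. Unset Printing Implicit Defensive.
Local Open Scope fset_scope.
Local Open Scope ring_scope.

(* Snap every Steiner point to a nearest point of P among its neighbours:
   an edge {p, s} becomes {p, pi s}, and since d s (pi s) <= d s p the
   triangle inequality stretches it by a factor at most 2.  A walk of G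
   alternates between P and S, so its image under the snapping map, with
   the loops removed, is a walk in the new graph on P at most twice as long.
   Each edge of G yields at most one new edge. *)

Definition argmin_seq (T : Type) (disp : Order.disp_t) (O : orderType disp)
    (f : T -> O) (x0 : T) (s : seq T) : T :=
  foldr (fun x m => if (f x < f m)%O then x else m) x0 s.

Lemma argmin_seq_mem (T : eqType) (disp : Order.disp_t) (O : orderType disp)
    (f : T -> O) x0 s :
  argmin_seq f x0 s \in x0 :: s.
Proof.
elim: s => [|x s IH] /=; first exact: mem_head.
case: ifP => _; first by rewrite !inE eqxx orbT.
by move: IH; rewrite !inE => /orP [->|->]; rewrite ?orbT.
Qed.

Lemma argmin_seq_le (T : eqType) (disp : Order.disp_t) (O : orderType disp)
    (f : T -> O) x0 s z :
  z \in x0 :: s -> (f (argmin_seq f x0 s) <= f z)%O.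
Proof.
elim: s z => [|x s IH] z /=; first by rewrite inE => /eqP ->.
set m := argmin_seq f x0 s in IH *.
have le_m y : y \in x0 :: s -> (f (if (f x < f m)%O then x else m) <= f y)%O.
  by move=> /IH fmy; case: ltP => // /ltW /le_trans; apply.
rewrite !in_cons => /or3P [/eqP ->|/eqP ->|zs].
- by apply: le_m; exact: mem_head.
- by case: ltP.
- by apply: le_m; rewrite in_cons zs orbT.
Qed.

Lemma walk_len_cons (R : realType) (X : choiceType) (d : X -> X -> R) u x s :
  walk_len d u (x :: s) = d u x + walk_len d x s.
Proof. by rewrite /walk_len /= big_cons. Qed.

Lemma walk_len_map_le (R : realType) (X Y : choiceType)
    (d : X -> X -> R) (d' : Y -> Y -> R) (e : rel X) (f : X -> Y) (c : R) u s :
  (forall a b, e a b -> d' (f a) (f b) <= c * d a b) ->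
  path e u s -> walk_len d' (f u) (map f s) <= c * walk_len d u s.
Proof.
move=> stretch; elim: s u => [|x s IH] u /=.
  by rewrite /walk_len !big_nil mulr0.
case/andP=> eux pxs; rewrite !walk_len_cons mulrDr.
by apply: lerD; [exact: stretch | exact: IH].
Qed.

Lemma path_remove_loops (R : realType) (X : choiceType) (d : X -> X -> R)
    (e : rel X) x t :
  (forall a, d a a = 0) -> path [rel a b | (a == b) || e a b] x t ->
  exists t', [/\ path e x t', last x t' = last x t & walk_len d x t' = walk_len d x t].
Proof.
move=> d0; elim: t x => [|y t IH] x /=; first by exists [::]; split.
case/andP=> /orP [/eqP <-|exy] /IH [t' [pt' lt' wt']].
  by exists t'; split => //; rewrite walk_len_cons d0 add0r.
by exists (y :: t'); split; rewrite /= ?exy ?lt' // !walk_len_cons wt'.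
Qed.

Lemma adjC (X : choiceType) (E : {fset {fset X}}) a b : adj E a b = adj E b a.
Proof. by rewrite /adj fsetUC. Qed.

Lemma fset2_straddle (X : choiceType) (A : {fset X}) a b p s :
  [fset a; b] = [fset p; s] -> p \in A -> s \notin A -> (a \in A) = (b \notin A).
Proof.
move=> eq_ab pA sA.
have ps : p != s by apply: contraNneq sA => <-.
have ab : a != b.
  by move: (congr1 (fun e => #|` e|) eq_ab); rewrite !cardfs2 ps; case: (a != b).
move: ab; have := fset21 a b; have := fset22 a b; rewrite eq_ab !inE.
by case/orP => /eqP -> /orP [] /eqP ->; rewrite ?eqxx // pA (negbTE sA).
Qed.

Section Snapping.

Variables (R : realType) (X : choiceType) (d : X -> X -> R).
Variables (P : {fset X}) (E : {fset {fset X}}).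

Hypothesis d_refl : forall a, d a a = 0.
Hypothesis dC : forall a b, d a b = d b a.
Hypothesis d_triangle : forall a b c, d a c <= d a b + d b c.
Hypothesis edge_sides : forall a b, adj E a b -> (a \in P) = (b \notin P).
Hypothesis edge_pairs : forall e, e \in E -> exists a b, e = [fset a; b].

Definition nearest_neighbour (y : X) : X :=
  if [seq z <- enum_fset P | adj E z y] is c :: cs then argmin_seq (d y) c cs else y.

Lemma nearest_neighbour_spec x y : x \in P -> adj E x y ->
  nearest_neighbour y \in P /\ d y (nearest_neighbour y) <= d y x.
Proof.
rewrite /nearest_neighbour => xP exy.
have : x \in [seq z <- enum_fset P | adj E z y] by rewrite mem_filter exy.
case: [seq z <- _ | _] (fun z => @mem_filter _ (adj E ^~ y) z (enum_fset P))
  => [//|c cs] memf xcs; split; last exact: argmin_seq_le.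
by have := argmin_seq_mem (d y) c cs; rewrite memf => /andP [].
Qed.

Definition snap (x : X) : X := if x \in P then x else nearest_neighbour x.

Lemma snap_mem a b : adj E a b -> snap a \in P.
Proof.
rewrite /snap; case: ifP => // /negbT aP eab.
have bP : b \in P by rewrite -[b \in P]negbK -(edge_sides eab).
by rewrite adjC in eab; case: (nearest_neighbour_spec bP eab).
Qed.

Lemma snap_stretch a b : adj E a b -> d (snap a) (snap b) <= 2 * d a b.
Proof.
wlog aP : a b / a \in P => [hwlog eab|].
  case: (boolP (a \in P)) => [aP|aPn]; first exact: hwlog.
  have bP : b \in P by rewrite -[b \in P]negbK -(edge_sides eab).
  by rewrite dC (dC a); apply: hwlog; rewrite // adjC.
move=> eab; have [_ near] := nearest_neighbour_spec aP eab.
have bPn : b \notin P by rewrite -(edge_sides eab).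
rewrite /snap aP (negbTE bPn).
apply: le_trans (d_triangle _ b _) _.
by rewrite mulr2n mulrDl mul1r lerD2l (dC a b).
Qed.

Definition snapped_edges : {fset {fset X}} :=
  [fset e in [fset snap @` f | f : {fset X} in E] | #|` e| == 2%N].

Lemma snapped_edges_card : (#|` snapped_edges| <= #|` E|)%N.
Proof.
apply: (@leq_trans #|` [fset snap @` f | f : {fset X} in E]|); last exact: leq_imfset_card.
by apply: fsubset_leq_card; apply/fsubsetP => e; rewrite inE => /andP [].
Qed.

Lemma snapped_edges_geometric : geometric_graph (P `|` fset0) snapped_edges.
Proof.
move=> e; rewrite inE => /andP [/imfsetP [e0 e0E ->] /eqP card2]; split => //.
have [a [b e0ab]] := edge_pairs e0E.
have eab : adj E a b by rewrite /adj -e0ab.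
apply/fsubsetP => z; rewrite e0ab imfset_fset2 fsetU0 !inE.
by case/orP => /eqP ->; [exact: snap_mem eab | rewrite adjC in eab; exact: snap_mem eab].
Qed.

Lemma adj_snap a b : adj E a b -> (snap a == snap b) || adj snapped_edges (snap a) (snap b).
Proof.
move=> eab; case: eqP => //= /eqP neq.
rewrite /adj /snapped_edges !inE cardfs2 neq eqxx andbT.
by apply/imfsetP; exists [fset a; b]; rewrite ?imfset_fset2.
Qed.

Lemma snap_distG_le u v b : u \in P -> v \in P ->
  distG_le d E u v b -> distG_le d snapped_edges u v (2 * b).
Proof.
move=> uP vP [s [ps [lv len]]].
have su : snap u = u by rewrite /snap uP.
have pmap : path [rel x y | (x == y) || adj snapped_edges x y] u (map snap s).
  by rewrite -su; apply: homo_path ps => x y; exact: adj_snap.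
have [s' [ps' ls' ws']] := path_remove_loops d_refl pmap.
exists s'; split => //; split.
  by rewrite ls' -su last_map lv /snap vP.
rewrite ws' -{1}su; apply: le_trans (walk_len_map_le snap_stretch ps) _.
by rewrite ler_pM2l.
Qed.

End Snapping.

Theorem mainTheorem7 (R : realType) (X : choiceType) (d : X -> X -> R)
    (P S : {fset X}) (E : {fset {fset X}}) (eps : R) :
  is_metric d -> 0 <= eps ->
  steiner_spanner d P S E (1 + eps) -> bipartite_PS P S E ->
  exists E' : {fset {fset X}},
    spanner d P E' (2 + 2 * eps) /\ (#|` E'| <= #|` E|)%N.
Proof.
move=> [_ [d_eq0 [dC d_triangle]]] _ [disjPS [_ stretch]] bip.
have d_refl a : d a a = 0 by apply/d_eq0.
have edge_pairs e : e \in E -> exists a b, e = [fset a; b].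
  by case/bip=> p [s [_ [_ ->]]]; exists p, s.
have edge_sides a b : adj E a b -> (a \in P) = (b \notin P).
  case/bip=> p [s [pP [sS eq_ab]]]; apply: fset2_straddle eq_ab pP _.
  by apply: contraTN sS => /(fdisjointP disjPS).
exists (snapped_edges d P E); split; last exact: snapped_edges_card.
split; first exact: fdisjointX0.
split; first exact: snapped_edges_geometric.
have -> : 2 + 2 * eps = 2 * (1 + eps) by rewrite mulrDr mulr1.
by move=> u v uP vP; rewrite -mulrA; apply: snap_distG_le; last exact: stretch.
Qed.
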